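(* Let $\mathcal{C}$ be a $\beta$-avoiding simplicial complex and let $G$ be its $1$-skeleton. Then $G$ is one of the following: (a) a complete graph $K_N$; (b) two complete graphs glued along a (possibly empty) common clique; (c) an iterated cone over a $4$-cycle, i.e. the join of a $4$-cycle with a complete graph $K_p$ for some $p\ge0$.
   Context: A simplicial complex on a finite ground set $V$ is a family of subsets of $V$ closed under subsets; a vertex $v$ is non-ghost if $\{v\}\in\mathcal{C}$. The $1$-skeleton of $\mathcal{C}$ is the graph whose vertices are the non-ghost vertices and whose edges are the $2$-element faces. For $S\subseteq V$, $\mathcal{C}\setminus S$ is the induced subcomplex $\{F\in\mathcal{C}:F\cap S=\emptyset\}$ on $V\setminus S$; for a face $R$, $\operatorname{link}_R(\mathcal{C})=\{F\setminus R: R\subseteq F\in\mathcal{C}\}$ on $V\setminus R$. A minor is $\operatorname{link}_R(\mathcal{C}\setminus S)$ with $S\cap R=\emptyset$, $R$ a face. Alexander dual of $\mathcal{D}$ on $V$: $\{S\subseteq V: V\setminus S\notin\mathcal{D}\}$. $\mathcal{C}$ is $\beta$-avoiding if no minor is isomorphic (via a bijection of ground sets carrying faces to faces) to any of: $P_4$ (on $\{1,2,3,4\}$, facets $12,23,34$); $O_6$ (on $\{1,\dots,6\}$, faces the subsets containing none of $\{1,2\},\{3,4\},\{5,6\}$) or its dual $O_6^*$; $J_1$ (on $\{1,\dots,5\}$, facets $12,15,234,345$) or $J_1^*$ (facets $134,235,245$); $J_2$ (on $\{1,\dots,5\}$, facets $12,235,34,145$); $\partial\Delta_n\sqcup\{v\}$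 for $n\ge1$ (all proper subsets of an $(n+1)$-set together with one extra isolated vertex). *)

From mathcomp Require Import all_boot.
Set Implicit Arguments. Unset Strict Implicit. Unset Printing Implicit Defensive.

(* A simplicial complex on the finite ground set V (= all of the finType V)
   is a family of subsets closed under taking subsets. *)
Definition is_complex (V : finType) (C : {set {set V}}) : Prop :=
  forall F G : {set V}, F \in C -> G \subset F -> G \in C.

(* The minor link_R (C \ S), a complex on the ground set V \ (S u R). *)
Definition minor_ground (V : finType) (S R : {set V}) : {set V} := ~: (S :|: R).
Definition minor_faces (V : finType) (C : {set {set V}}) (S R : {set V})
  : {set {set V}} :=
  [set F :\: R | F in [set F in C | (R \subset F) && [disjoint F & S]]].

Definition iso_to (n : nat) (K : {set {set 'I_n}}) (V : finType)
  (W : {set V}) (D : {set {set V}}) : Prop :=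
  exists f : 'I_n -> V, [/\ injective f, f @: setT = W &
     forall F : {set 'I_n}, (F \in K) = (f @: F \in D)].

Definition o {n : nat} (k : nat) : 'I_n.+1 := inord k.

Definition gen (n : nat) (facets : seq {set 'I_n}) : {set {set 'I_n}} :=
  [set F : {set 'I_n} | has (fun G : {set 'I_n} => F \subset G) facets].

Definition adual (n : nat) (K : {set {set 'I_n}}) : {set {set 'I_n}} :=
  [set S : {set 'I_n} | (~: S) \notin K].

(* vertices 1..k of the paper are 0..k-1 here *)
Definition P4 : {set {set 'I_4}} :=
  gen [:: [set o 0; o 1]; [set o 1; o 2]; [set o 2; o 3]].
Definition O6 : {set {set 'I_6}} :=
  [set F : {set 'I_6} | ~~ ([set o 0; o 1] \subset F) && ~~ ([set o 2; o 3] \subset F)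
                        && ~~ ([set o 4; o 5] \subset F)].
Definition O6dual : {set {set 'I_6}} := adual O6.
Definition J1 : {set {set 'I_5}} :=
  gen [:: [set o 0; o 1]; [set o 0; o 4]; [set o 1; o 2; o 3]; [set o 2; o 3; o 4]].
Definition J1dual : {set {set 'I_5}} :=
  gen [:: [set o 0; o 2; o 3]; [set o 1; o 2; o 4]; [set o 1; o 3; o 4]].
Definition J2 : {set {set 'I_5}} :=
  gen [:: [set o 0; o 1]; [set o 1; o 2; o 4]; [set o 2; o 3]; [set o 0; o 3; o 4]].
(* boundary of the n-simplex on {0..n} plus the isolated vertex n+1 *)
Definition bdry_plus_pt (n : nat) : {set {set 'I_n.+2}} :=
  [set F : {set 'I_n.+2} | (F \proper [set i : 'I_n.+2 | i != ord_max])
                           || (F == [set ord_max])].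

Definition beta_avoiding (V : finType) (C : {set {set V}}) : Prop :=
  forall S R : {set V}, R \in C -> [disjoint S & R] ->
    let W := minor_ground S R in
    let D := minor_faces C S R in
    ~ iso_to P4 W D /\ ~ iso_to O6 W D /\ ~ iso_to O6dual W D /\
    ~ iso_to J1 W D /\ ~ iso_to J1dual W D /\ ~ iso_to J2 W D /\
    (forall n, 1 <= n -> ~ iso_to (bdry_plus_pt n) W D).

Definition nonghost (V : finType) (C : {set {set V}}) : {set V} :=
  [set v | [set v] \in C].
Definition edge (V : finType) (C : {set {set V}}) (u v : V) : bool :=
  (u != v) && ([set u; v] \in C).

(* Each forbidden minor becomes a forbidden induced subgraph of the 1-skeleton G,
   possibly after passing to the link of a vertex: the minor [bdry_plus_pt 1] forbids
   three pairwise non-adjacent vertices, [P4] an induced path on four vertices, [J1]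
   (with the links) the complement of P3 + K2, and [O6] together with [J2] the
   octahedron K222.  If G has an induced 4-cycle, every other vertex is joined to all
   of it and any further non-edge would complete an octahedron, so G is the join (c).
   Otherwise the non-edges of G form a complete bipartite graph between the
   non-neighbours of two non-adjacent vertices x and y, and G is the union of the two
   cliques (b). *)

From mathcomp Require Import all_boot.
Set Implicit Arguments. Unset Strict Implicit. Unset Printing Implicit Defensive.

Definition nonedge (V : eqType) (adj : rel V) (u v : V) : bool := (u != v) && ~~ adj u v.

Section Trichotomy.
Variables (V : finType) (N : {set V}) (adj : rel V).
Hypotheses (adj_sym : symmetric adj) (adj_irr : irreflexive adj)
  (adjN : forall u v, adj u v -> u \in N).
Local Notation nonedge := (nonedge adj).

Hypothesis no_indep3 : forall x y z, x \in N -> y \in N -> z \in N ->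
  nonedge x y -> nonedge x z -> nonedge y z -> False.
Hypothesis no_P4 : forall a b c d, adj a b -> adj b c -> adj c d ->
  nonedge a c -> nonedge a d -> nonedge b d -> False.
Hypothesis no_co_P3_K2 : forall y x1 x2 z w,
  nonedge y x1 -> nonedge y x2 -> nonedge z w -> adj x1 x2 ->
  adj z y -> adj z x1 -> adj z x2 -> adj w y -> adj w x1 -> adj w x2 -> False.
Hypothesis no_K222 : forall p1 q1 p2 q2 p3 q3,
  nonedge p1 q1 -> nonedge p2 q2 -> nonedge p3 q3 ->
  adj p1 p2 -> adj p1 q2 -> adj q1 p2 -> adj q1 q2 ->
  adj p1 p3 -> adj p1 q3 -> adj q1 p3 -> adj q1 q3 ->
  adj p2 p3 -> adj p2 q3 -> adj q2 p3 -> adj q2 q3 -> False.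

Lemma adj_neq u v : adj u v -> u != v.
Proof. by apply: contraTneq => ->; rewrite adj_irr. Qed.

Lemma nonedge_sym : symmetric nonedge.
Proof. by move=> u v; rewrite /nonedge eq_sym adj_sym. Qed.

Lemma nonedge_neq u v : nonedge u v -> u != v.
Proof. by case/andP. Qed.

Lemma adj_by_contra u v : u != v -> (nonedge u v -> False) -> adj u v.
Proof. by move=> uv h; apply/negPn/negP => nuv; apply: h; rewrite /nonedge uv. Qed.

Lemma adj_nonedge_false u v : adj u v -> nonedge u v -> False.
Proof. by move=> huv /andP[_]; rewrite huv. Qed.

Ltac adj_fact := first [ assumption | rewrite adj_sym; assumption ].
Ltac nonedge_fact := first [ assumption | rewrite nonedge_sym; assumption ].
Ltac neq_fact := first [ assumption | rewrite eq_sym; assumption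
  | apply: adj_neq; adj_fact | apply: nonedge_neq; nonedge_fact ].
Ltac graph := first [ adj_fact | nonedge_fact | neq_fact ].

Definition induced_C4 a b c d :=
  [&& nonedge a c, nonedge b d & [&& adj a b, adj b c, adj c d & adj d a]].

Lemma induced_C4_rot a b c d : induced_C4 a b c d -> induced_C4 b c d a.
Proof.
case/and3P=> ac bd /and4P[ab bc cd da].
by rewrite /induced_C4 bc cd da ab bd nonedge_sym ac.
Qed.

Lemma induced_C4_attach a b c d u : induced_C4 a b c d -> u \in N ->
  u != a -> u != b -> u != c -> u != d -> adj u a.
Proof.
case/and3P=> ac bd /and4P[ab bc cd da] uN ua ub uc ud.
apply: adj_by_contra => // nua.
have aN : a \in N by exact: adjN ab.
have cN : c \in N by exact: adjN cd.
have uc' : adj u c by apply: adj_by_contra => // nuc; apply: (no_indep3 uN aN cN); graph.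
have ub' : adj u b.
  by apply: adj_by_contra => // nub; apply: (no_P4 (a:=a) (b:=b) (c:=c) (d:=u)); graph.
have ud' : adj u d.
  by apply: adj_by_contra => // nud; apply: (no_P4 (a:=a) (b:=d) (c:=c) (d:=u)); graph.
by apply: (no_co_P3_K2 (y:=a) (x1:=u) (x2:=c) (z:=b) (w:=d)); graph.
Qed.

Lemma induced_C4_join a b c d u : induced_C4 a b c d -> u \in N ->
  u \notin [:: a; b; c; d] -> [/\ adj u a, adj u b, adj u c & adj u d].
Proof.
move=> C4 uN; rewrite !inE !negb_or => /and4P[ua ub uc ud].
have C4' := induced_C4_rot C4; have C4'' := induced_C4_rot C4'.
split; first exact: induced_C4_attach C4 uN ua ub uc ud.
- exact: induced_C4_attach C4' uN ub uc ud ua.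
- exact: induced_C4_attach C4'' uN uc ud ua ub.
- exact: induced_C4_attach (induced_C4_rot C4'') uN ud ua ub uc.
Qed.

Lemma induced_C4_nonedge a b c d u v : induced_C4 a b c d -> u \in N -> v \in N ->
  nonedge u v -> [set u; v] = [set a; c] \/ [set u; v] = [set b; d].
Proof.
move=> C4; have /and3P[ac bd /and4P[ab bc cd da]] := C4.
have inside w z : w \in N -> z \in N -> nonedge w z -> w \in [:: a; b; c; d].
  move=> wN zN nwz; apply/negPn/negP => wQ.
  have [wa wb wc wd] := induced_C4_join C4 wN wQ.
  have zQ : z \notin [:: a; b; c; d].
    rewrite !inE; apply/negP => /or4P[] /eqP zx;
      by apply: (adj_nonedge_false _ nwz); rewrite zx.
  have [za zb zc zd] := induced_C4_join C4 zN zQ.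
  by apply: (no_K222 (p1:=w) (q1:=z) (p2:=a) (q2:=c) (p3:=b) (q3:=d)); graph.
move=> uN vN nuv; have := inside _ _ vN uN; rewrite nonedge_sym => /(_ nuv).
move: (inside _ _ uN vN nuv); rewrite !inE => /or4P[] /eqP eu /or4P[] /eqP ev; subst;
  first [ by left | by right | by left; rewrite setUC | by right; rewrite setUC
        | by rewrite /nonedge eqxx in nuv | by case: (adj_nonedge_false _ nuv); graph ].
Qed.

Lemma adjE u v : u != v -> adj u v = ~~ nonedge u v.
Proof. by move=> uv; rewrite /nonedge uv negbK. Qed.

Lemma nonedge_set2 a c u v : u != v -> [set u; v] = [set a; c] ->
  nonedge a c -> nonedge u v.
Proof.
move=> uv E ac; have: u \in [set a; c] by rewrite -E set21.
have: v \in [set a; c] by rewrite -E set22.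
rewrite !inE => /orP[] /eqP ev /orP[] /eqP eu; subst => //.
- by rewrite eqxx in uv.
- by rewrite nonedge_sym.
- by rewrite eqxx in uv.
Qed.

Lemma C4_join_structure a b c d : induced_C4 a b c d ->
  [/\ a \in N, b \in N, c \in N & d \in N] /\ uniq [:: a; b; c; d] /\
  forall u v, u \in N -> v \in N -> u != v ->
    (adj u v <-> ~ ([set u; v] = [set a; c] \/ [set u; v] = [set b; d])).
Proof.
move=> C4; have /and3P[ac bd /and4P[ab bc cd da]] := C4.
split; first by split; [exact: adjN ab | exact: adjN bc | exact: adjN cd | exact: adjN da].
split; first by rewrite /= !inE !negb_or !andbT; repeat (apply/andP; split); graph.
move=> u v uN vN uv; split.
  by move=> euv [] E; apply: (adj_nonedge_false euv); apply: (nonedge_set2 uv E).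
move=> hnot; apply: adj_by_contra => // nuv; apply: hnot.
exact: induced_C4_nonedge C4 uN vN nuv.
Qed.

Lemma nonedge_cross x y u v : x \in N -> y \in N -> nonedge x y ->
  u \in N -> v \in N -> nonedge u y -> nonedge v x -> u != v -> nonedge u v.
Proof.
move=> xN yN nxy uN vN nuy nvx uv; rewrite /nonedge uv /=; apply/negP => euv.
have ux : u != x by apply/eqP=> eux; subst; case: (adj_nonedge_false euv); graph.
have vy : v != y by apply/eqP=> evy; subst; case: (adj_nonedge_false euv); graph.
have exu : adj x u.
  by apply: adj_by_contra => [|nxu]; [graph | apply: (no_indep3 xN yN uN); graph].
have evy : adj v y by apply: adj_by_contra => // nvy; apply: (no_indep3 vN xN yN); graph.
by apply: (no_P4 exu euv evy); graph.
Qed.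

Lemma nonedge_side x y u v : x \in N -> y \in N -> nonedge x y ->
  u \in N -> v \in N -> nonedge u v -> nonedge u y -> u != x -> v != x -> v != y ->
  nonedge v x.
Proof.
move=> xN yN nxy uN vN nuv nuy ux vx vy; rewrite /nonedge vx /=; apply/negP => evx.
have evy : adj v y by apply: adj_by_contra => // nvy; apply: (no_indep3 uN vN yN); graph.
have eux : adj u x by apply: adj_by_contra => // nux; apply: (no_indep3 uN xN yN); graph.
by apply: (no_P4 eux (c:=v) (d:=y)); graph.
Qed.

Lemma nonedge_split x y u v : (forall a b c d, ~~ induced_C4 a b c d) ->
  x \in N -> y \in N -> nonedge x y -> u \in N -> v \in N -> nonedge u v ->
  nonedge u y && nonedge v x || nonedge u x && nonedge v y.
Proof.
move=> no_C4 xN yN nxy uN vN nuv.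
have nyx : nonedge y x by rewrite nonedge_sym.
have nvu : nonedge v u by rewrite nonedge_sym.
case: (eqVneq u x) => [eux|ux]; first by subst; rewrite nxy nvu.
case: (eqVneq u y) => [euy|uy]; first by subst; rewrite nyx nvu orbT.
case: (eqVneq v x) => [evx|vx]; first by subst; rewrite nuv nxy orbT.
case: (eqVneq v y) => [evy|vy]; first by subst; rewrite nuv nyx.
have [nuy|euy] := boolP (nonedge u y); first by rewrite (nonedge_side xN yN nxy uN vN).
have [nux|eux] := boolP (nonedge u x).
  by rewrite (nonedge_side yN xN nyx uN vN) ?orbT.
have evy : adj v y.
  apply: adj_by_contra => // nvy; move/negP: eux; apply.
  by apply: (nonedge_side xN yN nxy vN uN); rewrite // eq_sym.
have evx : adj v x.
  apply: adj_by_contra => // nvx; move/negP: euy; apply.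
  by apply: (nonedge_side yN xN nyx vN uN); rewrite // eq_sym.
case/negP: (no_C4 u x v y); rewrite /induced_C4 nuv nxy (adj_sym x) (adj_sym y).
by rewrite (adjE ux) (adjE uy) eux euy evx evy.
Qed.

Lemma two_cliques_structure x y : (forall a b c d, ~~ induced_C4 a b c d) ->
  x \in N -> y \in N -> nonedge x y ->
  exists A B : {set V}, A :|: B = N /\
    forall u v, u \in N -> v \in N -> u != v ->
      (adj u v <-> (u \in A /\ v \in A) \/ (u \in B /\ v \in B)).
Proof.
move=> no_C4 xN yN nxy.
have not_both w : w \in N -> ~~ (nonedge w x && nonedge w y).
  by move=> wN; apply/andP => -[nwx nwy]; apply: (no_indep3 wN xN yN); graph.
exists [set w in N | ~~ nonedge w x], [set w in N | ~~ nonedge w y]; split.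
  apply/setP => w; rewrite !inE -andb_orr -negb_and.
  by case: (boolP (w \in N)) => // /not_both.
move=> u v uN vN uv; rewrite !inE uN vN (adjE uv) /=.
have -> : nonedge u v = nonedge u y && nonedge v x || nonedge u x && nonedge v y.
  apply/idP/idP; first exact: nonedge_split.
  case/orP=> /andP[n1 n2]; first exact: (nonedge_cross xN yN nxy uN vN).
  by apply: (nonedge_cross yN xN _ uN vN); rewrite // nonedge_sym.
move: (not_both u uN) (not_both v vN).
by case: (nonedge u x); case: (nonedge u y); case: (nonedge v x); case: (nonedge v y);
  intuition.
Qed.

Theorem graph_trichotomy :
  (forall u v, u \in N -> v \in N -> u != v -> adj u v)
  \/
  (exists A B : {set V}, A :|: B = N /\
     forall u v, u \in N -> v \in N -> u != v ->
       (adj u v <-> (u \in A /\ v \in A) \/ (u \in B /\ v \in B)))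
  \/
  (exists a b c d : V, [/\ a \in N, b \in N, c \in N & d \in N] /\
     uniq [:: a; b; c; d] /\
     forall u v, u \in N -> v \in N -> u != v ->
       (adj u v <-> ~ ([set u; v] = [set a; c] \/ [set u; v] = [set b; d]))).
Proof.
have [complete|] := boolP [forall u in N, forall v in N, (u != v) ==> adj u v].
  left=> u v uN vN uv.
  by move/forall_inP: complete => /(_ u uN)/forall_inP/(_ v vN)/implyP; apply.
case/forall_inPn=> x xN /forall_inPn[y yN]; rewrite negb_imply => nxy; right.
have [/existsP[a /existsP[b /existsP[c /existsP[d C4]]]]|no_C4] :=
  boolP [exists a, exists b, exists c, exists d, induced_C4 a b c d].
  by right; exists a, b, c, d; exact: C4_join_structure.
left; apply: (two_cliques_structure _ xN yN nxy) => a b c d.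
by apply: contraNN no_C4 => C4; apply/existsP; exists a; apply/existsP; exists b;
  apply/existsP; exists c; apply/existsP; exists d.
Qed.

End Trichotomy.

Lemma val_o n k : k <= n -> nat_of_ord (@o n k) = k.
Proof. exact: inordK. Qed.

Lemma eq_o n i j : i <= n -> j <= n -> (@o n i == o j) = (i == j).
Proof. by move=> lei lej; rewrite -val_eqE /= !val_o. Qed.

Lemma enum_ord_o n : enum 'I_n.+1 = [seq o k | k <- iota 0 n.+1].
Proof.
apply: (inj_map val_inj); rewrite val_enum_ord -map_comp.
by apply/esym/map_id_in => k; rewrite mem_iota => /andP[_ ltk]; apply: val_o.
Qed.

Lemma subset_enum (T : finType) (A B : {set T}) :
  (A \subset B) = all (fun i => (i \in A) ==> (i \in B)) (enum T).
Proof.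
apply/subsetP/allP => [AB i _|AB i Ai]; first by apply/implyP/AB.
exact: implyP (AB i (mem_enum _ i)) Ai.
Qed.

Lemma subset_set1 (T : finType) (F : {set T}) a :
  (F \subset [set a]) = all (fun i => (i \in F) ==> (i == a)) (enum T).
Proof. by rewrite subset_enum; apply: eq_all => i; rewrite !inE. Qed.

Lemma subset_set2 (T : finType) (F : {set T}) a b :
  (F \subset [set a; b]) = all (fun i => (i \in F) ==> (i == a) || (i == b)) (enum T).
Proof. by rewrite subset_enum; apply: eq_all => i; rewrite !inE. Qed.

Lemma subset_set3 (T : finType) (F : {set T}) a b c :
  (F \subset [set a; b; c]) =
  all (fun i => (i \in F) ==> [|| i == a, i == b | i == c]) (enum T).
Proof. by rewrite subset_enum; apply: eq_all => i; rewrite !inE orbA. Qed.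

Definition presented_by n (K : {set {set 'I_n}}) (facets nonfaces : seq {set 'I_n}) :=
  forall F : {set 'I_n},
    ((F \in K) ==> has (fun G : {set 'I_n} => F \subset G) facets)
    && ((F \notin K) ==> has (fun M : {set 'I_n} => M \subset F) nonfaces).

Lemma presented_byE n (K : {set {set 'I_n}}) facets nonfaces (g : pred {set 'I_n}) :
  presented_by K facets nonfaces -> (forall A B : {set 'I_n}, A \subset B -> g B -> g A) ->
  all g facets -> all (predC g) nonfaces -> forall F, (F \in K) = g F.
Proof.
move=> presK g_mono /allP g_facets /allP g_nonfaces F.
have /andP[/implyP face /implyP nonface] := presK F.
apply/idP/idP => [/face/hasP[G /g_facets gG FG]|gF]; first exact: g_mono FG gG.
apply/negPn/negP => /nonface/hasP[M /g_nonfaces /negP gM MF].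
exact: gM (g_mono _ _ MF gF).
Qed.

Ltac truth_table F :=
  rewrite /= ?subset_set3 ?subset_set2 ?subset_set1 ?subUset ?sub1set ?enum_ord_o /=;
  rewrite ?eq_o //=;
  repeat match goal with |- context [in_mem (@o ?n ?k) _] => case: (@o n k \in F) => //= end.

Lemma P4_presented : presented_by P4
  [:: [set o 0; o 1]; [set o 1; o 2]; [set o 2; o 3]]
  [:: [set o 0; o 2]; [set o 0; o 3]; [set o 1; o 3]].
Proof. by move=> F; rewrite inE; truth_table F. Qed.

Lemma J1_presented : presented_by J1
  [:: [set o 0; o 1]; [set o 0; o 4]; [set o 1; o 2; o 3]; [set o 2; o 3; o 4]]
  [:: [set o 0; o 2]; [set o 0; o 3]; [set o 1; o 4]].
Proof. by move=> F; rewrite inE; truth_table F. Qed.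

Lemma J2_presented : presented_by J2
  [:: [set o 0; o 1]; [set o 1; o 2; o 4]; [set o 2; o 3]; [set o 0; o 3; o 4]]
  [:: [set o 0; o 2]; [set o 1; o 3]; [set o 0; o 1; o 4]; [set o 2; o 3; o 4]].
Proof. by move=> F; rewrite inE; truth_table F. Qed.

Lemma O6_presented : presented_by O6
  [:: [set o 0; o 2; o 4]; [set o 0; o 2; o 5]; [set o 0; o 3; o 4]; [set o 0; o 3; o 5];
      [set o 1; o 2; o 4]; [set o 1; o 2; o 5]; [set o 1; o 3; o 4]; [set o 1; o 3; o 5]]
  [:: [set o 0; o 1]; [set o 2; o 3]; [set o 4; o 5]].
Proof. by move=> F; rewrite inE; truth_table F. Qed.

Lemma bdry_plus_pt1_presented : presented_by (bdry_plus_pt 1)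
  [:: [set o 0]; [set o 1]; [set o 2]] [:: [set o 0; o 1]; [set o 0; o 2]; [set o 1; o 2]].
Proof.
have max2 : ord_max = o 2 :> 'I_3 by apply: val_inj; rewrite /= val_o.
move=> F; rewrite inE properE eqEsubset [_ \subset [set _ | _]]subset_enum.
rewrite [[set _ | _] \subset _]subset_enum enum_ord_o /= !inE max2.
by truth_table F.
Qed.

Lemma minor_faces_setUr (V : finType) (C : {set {set V}}) (I R X : {set V}) :
  [disjoint I & R] -> X \subset I ->
  (X \in minor_faces C (~: (I :|: R)) R) = (X :|: R \in C).
Proof.
move=> dIR XI; apply/imsetP/idP => [[G]|XRC].
  rewrite inE => /and3P[GC RG _] ->; suff -> : G :\: R :|: R = G by [].
  apply/setP => z; rewrite !inE.
  by case: (boolP (z \in R)) => [/(subsetP RG)->|]; rewrite ?orbT ?orbF.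
exists (X :|: R).
  by rewrite inE XRC subsetUr disjoints_subset setCK setSU.
by rewrite setDUl setDv setU0; apply/esym/setDidPl/(disjointWl XI).
Qed.

Lemma iso_to_minor n (K : {set {set 'I_n}}) (V : finType) (C : {set {set V}})
    (R : {set V}) (f : 'I_n -> V) :
  injective f -> [disjoint f @: setT & R] -> (forall F, (F \in K) = (f @: F :|: R \in C)) ->
  iso_to K (minor_ground (~: (f @: setT :|: R)) R) (minor_faces C (~: (f @: setT :|: R)) R).
Proof.
move=> f_inj dfR fK; exists f; split=> // [|F].
  apply/setP => z; rewrite !inE.
  have [zR|zR] := boolP (z \in R); first by rewrite (disjointFl dfR zR) orbT.
  by rewrite !orbF negbK.
by rewrite minor_faces_setUr ?imsetS ?subsetT //; apply: fK.
Qed.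

Definition minor_free (V : finType) (C : {set {set V}}) n (K : {set {set 'I_n}}) :=
  forall S R : {set V}, R \in C -> [disjoint S & R] ->
    ~ iso_to K (minor_ground S R) (minor_faces C S R).

Lemma beta_avoiding_minor_free (V : finType) (C : {set {set V}}) : beta_avoiding C ->
  [/\ minor_free C P4, minor_free C O6, minor_free C J1, minor_free C J2
    & minor_free C (bdry_plus_pt 1)].
Proof.
by move=> hB; split=> S R RC dSR; case: (hB S R RC dSR) => [? [? [? [? [? [? bd]]]]]];
  last exact: bd.
Qed.

Lemma no_presented_copy n (K : {set {set 'I_n}}) facets nonfaces
    (V : finType) (C : {set {set V}}) (R : {set V}) (s : seq V) (x0 : V) :
  is_complex C -> minor_free C K -> presented_by K facets nonfaces ->
  R \in C -> uniq s -> size s = n -> [disjoint [set x in s] & R] ->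
  all (fun G : {set 'I_n} => [set nth x0 s i | i : 'I_n in G] :|: R \in C) facets ->
  all (fun M : {set 'I_n} => [set nth x0 s i | i : 'I_n in M] :|: R \notin C) nonfaces ->
  False.
Proof.
move=> hC freeK presK RC s_uniq s_size dsR facesC nonfacesC.
pose f (i : 'I_n) := nth x0 s i.
have f_inj : injective f.
  by move=> i j /eqP; rewrite nth_uniq ?s_size // => /eqP/val_inj.
have dfR : [disjoint f @: setT & R].
  apply: disjointWl dsR; apply/subsetP => _ /imsetP[i _ ->].
  by rewrite inE mem_nth ?s_size.
apply: (freeK _ R RC _ (iso_to_minor f_inj dfR _)).
  by rewrite disjoints_subset setCS subsetUr.
apply: (presented_byE (g := fun F => f @: F :|: R \in C) presK _ facesC nonfacesC).
by move=> A B AB gB; apply: hC gB _; apply/setSU/imsetS.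
Qed.

Lemma disjoints0 (T : finType) (A : {set T}) : [disjoint A & set0].
Proof. by rewrite disjoints_subset setC0 subsetT. Qed.

Ltac copy_facts := rewrite /= ?imsetU ?imsetU1 ?imset_set1 ?val_o //= ?setU0.

Section Configurations.
Variables (V : finType) (C : {set {set V}}).
Hypotheses (hC : is_complex C) (free_P4 : minor_free C P4) (free_O6 : minor_free C O6)
  (free_J1 : minor_free C J1) (free_J2 : minor_free C J2)
  (free_bdry : minor_free C (bdry_plus_pt 1)).

Lemma no_three_points_in_link R x y z : R \in C -> uniq [:: x; y; z] ->
  [disjoint [set w in [:: x; y; z]] & R] ->
  [set x] :|: R \in C -> [set y] :|: R \in C -> [set z] :|: R \in C ->
  [set x; y] :|: R \notin C -> [set x; z] :|: R \notin C -> [set y; z] :|: R \notin C ->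
  False.
Proof.
move=> RC xyz dR hx hy hz nxy nxz nyz.
by apply: (no_presented_copy (x0 := x) hC free_bdry bdry_plus_pt1_presented RC xyz erefl dR);
  copy_facts; rewrite ?hx ?hy ?hz ?nxy ?nxz ?nyz.
Qed.

Lemma no_P4_in_link R x1 x2 x3 x4 : R \in C -> uniq [:: x1; x2; x3; x4] ->
  [disjoint [set w in [:: x1; x2; x3; x4]] & R] ->
  [set x1; x2] :|: R \in C -> [set x2; x3] :|: R \in C -> [set x3; x4] :|: R \in C ->
  [set x1; x3] :|: R \notin C -> [set x1; x4] :|: R \notin C -> [set x2; x4] :|: R \notin C ->
  False.
Proof.
move=> RC xs dR h12 h23 h34 n13 n14 n24.
by apply: (no_presented_copy (x0 := x1) hC free_P4 P4_presented RC xs erefl dR);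
  copy_facts; rewrite ?h12 ?h23 ?h34 ?n13 ?n14 ?n24.
Qed.

Lemma no_J1_copy x0 x1 x2 x3 x4 : uniq [:: x0; x1; x2; x3; x4] ->
  [set x0; x1] \in C -> [set x0; x4] \in C -> [set x1; x2; x3] \in C -> [set x2; x3; x4] \in C ->
  [set x0; x2] \notin C -> [set x0; x3] \notin C -> [set x1; x4] \notin C -> False.
Proof.
move=> xs f1 f2 f3 f4 n1 n2 n3.
have C0 : set0 \in C by apply: hC f1 (sub0set _).
by apply: (no_presented_copy (x0 := x0) hC free_J1 J1_presented C0 xs erefl (disjoints0 _));
  copy_facts; rewrite ?f1 ?f2 ?f3 ?f4 ?n1 ?n2 ?n3.
Qed.

Lemma no_J2_copy x0 x1 x2 x3 x4 : uniq [:: x0; x1; x2; x3; x4] ->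
  [set x0; x1] \in C -> [set x1; x2; x4] \in C -> [set x2; x3] \in C -> [set x0; x3; x4] \in C ->
  [set x0; x2] \notin C -> [set x1; x3] \notin C -> [set x0; x1; x4] \notin C ->
  [set x2; x3; x4] \notin C -> False.
Proof.
move=> xs f1 f2 f3 f4 n1 n2 n3 n4.
have C0 : set0 \in C by apply: hC f1 (sub0set _).
by apply: (no_presented_copy (x0 := x0) hC free_J2 J2_presented C0 xs erefl (disjoints0 _));
  copy_facts; rewrite ?f1 ?f2 ?f3 ?f4 ?n1 ?n2 ?n3 ?n4.
Qed.

Lemma no_O6_copy x0 x1 x2 x3 x4 x5 : uniq [:: x0; x1; x2; x3; x4; x5] ->
  [set x0; x2; x4] \in C -> [set x0; x2; x5] \in C -> [set x0; x3; x4] \in C ->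
  [set x0; x3; x5] \in C -> [set x1; x2; x4] \in C -> [set x1; x2; x5] \in C ->
  [set x1; x3; x4] \in C -> [set x1; x3; x5] \in C ->
  [set x0; x1] \notin C -> [set x2; x3] \notin C -> [set x4; x5] \notin C -> False.
Proof.
move=> xs f1 f2 f3 f4 f5 f6 f7 f8 n1 n2 n3.
have C0 : set0 \in C by apply: hC f1 (sub0set _).
by apply: (no_presented_copy (x0 := x0) hC free_O6 O6_presented C0 xs erefl (disjoints0 _));
  copy_facts; rewrite ?f1 ?f2 ?f3 ?f4 ?f5 ?f6 ?f7 ?f8 ?n1 ?n2 ?n3.
Qed.

Lemma nonface_sup (F G : {set V}) : F \notin C -> F \subset G -> G \notin C.
Proof. by move=> nF FG; apply: contra nF => GC; apply: hC GC FG. Qed.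

Lemma edge_sym : symmetric (edge C).
Proof. by move=> u v; rewrite /edge eq_sym setUC. Qed.

Lemma edge_irr : irreflexive (edge C).
Proof. by move=> u; rewrite /edge eqxx. Qed.

Lemma edge_neq u v : edge C u v -> u != v.
Proof. by case/andP. Qed.

Lemma edge_face u v : edge C u v -> [set u; v] \in C.
Proof. by case/andP. Qed.

Lemma edge_nonghost u v : edge C u v -> u \in nonghost C.
Proof. by move/edge_face/hC; rewrite inE; apply; rewrite sub1set !inE eqxx. Qed.

Lemma nonedge_nonface u v : nonedge (edge C) u v -> [set u; v] \notin C.
Proof. by rewrite /nonedge /edge => /andP[-> /=]. Qed.

Ltac point_sets := by rewrite ?subUset ?sub1set !inE ?eqxx ?orbT.

Ltac face_fact := match goal with
  | H : _ |- _ => first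
    [ apply: hC H _; point_sets
    | apply: hC (edge_face H) _; point_sets
    | apply: nonface_sup H _; point_sets
    | apply: nonface_sup (nonedge_nonface H) _; point_sets ]
  end.

Ltac skeleton_neq := match goal with
  | |- is_true (?u != ?v) => first
    [ assumption | rewrite eq_sym; assumption
    | match goal with
      | H : is_true (edge C u v) |- _ => exact: edge_neq H
      | H : is_true (edge C v u) |- _ => rewrite eq_sym; exact: edge_neq H
      | H : is_true (nonedge (edge C) u v) |- _ => exact: nonedge_neq H
      | H : is_true (nonedge (edge C) v u) |- _ => rewrite eq_sym; exact: nonedge_neq H
      end ]
  end.

Ltac edge_fact := first
  [ assumption | rewrite edge_sym; assumption | rewrite (nonedge_sym edge_sym); assumption ].

Ltac distinct := rewrite /= ?inE ?negb_or; repeat (apply/andP; split); try done; skeleton_neq.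

Lemma skeleton_no_indep3 x y z : x \in nonghost C -> y \in nonghost C -> z \in nonghost C ->
  nonedge (edge C) x y -> nonedge (edge C) x z -> nonedge (edge C) y z -> False.
Proof.
rewrite !inE => xC yC zC nxy nxz nyz.
apply: (no_three_points_in_link (R := set0) (x := x) (y := y) (z := z));
  rewrite ?setU0 //; try face_fact.
- exact: hC xC (sub0set _).
- distinct.
- exact: disjoints0.
Qed.

Lemma skeleton_no_P4 a b c d : edge C a b -> edge C b c -> edge C c d ->
  nonedge (edge C) a c -> nonedge (edge C) a d -> nonedge (edge C) b d -> False.
Proof.
move=> ab bc cd nac nad nbd.
apply: (no_P4_in_link (R := set0) (x1 := a) (x2 := b) (x3 := c) (x4 := d));
  rewrite ?setU0 //; try face_fact.
- exact: hC (edge_face ab) (sub0set _).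
- distinct.
- exact: disjoints0.
Qed.

Lemma no_three_points_in_vertex_link v x y z : edge C x v -> edge C y v -> edge C z v ->
  uniq [:: x; y; z] ->
  [set x; y; v] \notin C -> [set x; z; v] \notin C -> [set y; z; v] \notin C -> False.
Proof.
move=> xv yv zv xyz nxy nxz nyz.
apply: (no_three_points_in_link (R := [set v]) (x := x) (y := y) (z := z)) => //; try face_fact.
by rewrite disjoint_sym disjoints1 !inE !negb_or; repeat (apply/andP; split); skeleton_neq.
Qed.

Lemma no_P4_in_vertex_link v x1 x2 x3 x4 :
  edge C x1 v -> edge C x2 v -> edge C x3 v -> edge C x4 v -> uniq [:: x1; x2; x3; x4] ->
  [set x1; x2; v] \in C -> [set x2; x3; v] \in C -> [set x3; x4; v] \in C ->
  [set x1; x3; v] \notin C -> [set x1; x4; v] \notin C -> [set x2; x4; v] \notin C -> False.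
Proof.
move=> x1v x2v x3v x4v xs f12 f23 f34 n13 n14 n24.
apply: (no_P4_in_link (R := [set v]) (x1 := x1) (x2 := x2) (x3 := x3) (x4 := x4)) => //;
  try face_fact.
by rewrite disjoint_sym disjoints1 !inE !negb_or; repeat (apply/andP; split); skeleton_neq.
Qed.

Lemma C4_cone_triangle v a b c d : nonedge (edge C) a c -> nonedge (edge C) b d ->
  edge C a b -> edge C b c -> edge C c d -> edge C d a ->
  edge C a v -> edge C b v -> edge C c v -> edge C d v -> [set a; b; v] \in C.
Proof.
move=> nac nbd ab bc cd da av bv cv dv.
apply/negPn/negP => nabv.
have nacv : [set a; c; v] \notin C by face_fact.
have nbdv : [set b; d; v] \notin C by face_fact.
have fbcv : [set b; c; v] \in C.
  by apply/negPn/negP => nbcv; apply: (no_three_points_in_vertex_link av bv cv); try distinct.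
have fadv : [set a; d; v] \in C.
  by apply/negPn/negP => nadv; apply: (no_three_points_in_vertex_link av bv dv); try distinct.
have ncdv : [set c; d; v] \notin C.
  apply/negP => fcdv.
  by apply: (no_P4_in_vertex_link bv cv dv av); try face_fact; distinct.
by apply: (no_J2_copy (x0 := a) (x1 := b) (x2 := c) (x3 := d) (x4 := v)); try face_fact; distinct.
Qed.

Lemma skeleton_no_co_P3_K2 y x1 x2 z w :
  nonedge (edge C) y x1 -> nonedge (edge C) y x2 -> nonedge (edge C) z w -> edge C x1 x2 ->
  edge C z y -> edge C z x1 -> edge C z x2 -> edge C w y -> edge C w x1 -> edge C w x2 -> False.
Proof.
move=> nyx1 nyx2 nzw x12 zy zx1 zx2 wy wx1 wx2.
have fz : [set x1; x2; z] \in C.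
  apply/negPn/negP => nz.
  by apply: (no_three_points_in_vertex_link (v := z) (x := x1) (y := x2) (z := y));
    try edge_fact; try face_fact; distinct.
have fw : [set x1; x2; w] \in C.
  apply/negPn/negP => nw.
  by apply: (no_three_points_in_vertex_link (v := w) (x := x1) (y := x2) (z := y));
    try edge_fact; try face_fact; distinct.
by apply: (no_J1_copy (x0 := y) (x1 := z) (x2 := x1) (x3 := x2) (x4 := w)); try face_fact;
  distinct.
Qed.

Lemma skeleton_no_K222 p1 q1 p2 q2 p3 q3 :
  nonedge (edge C) p1 q1 -> nonedge (edge C) p2 q2 -> nonedge (edge C) p3 q3 ->
  edge C p1 p2 -> edge C p1 q2 -> edge C q1 p2 -> edge C q1 q2 ->
  edge C p1 p3 -> edge C p1 q3 -> edge C q1 p3 -> edge C q1 q3 ->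
  edge C p2 p3 -> edge C p2 q3 -> edge C q2 p3 -> edge C q2 q3 -> False.
Proof.
move=> n1 n2 n3 e1 e2 e3 e4 e5 e6 e7 e8 e9 e10 e11 e12.
apply: (no_O6_copy (x0 := p1) (x1 := q1) (x2 := p2) (x3 := q2) (x4 := p3) (x5 := q3));
  try face_fact; first distinct.
- by apply: (C4_cone_triangle (c := q1) (d := q2)); edge_fact.
- by apply: (C4_cone_triangle (c := q1) (d := q2)); edge_fact.
- by apply: (C4_cone_triangle (c := q1) (d := p2)); edge_fact.
- by apply: (C4_cone_triangle (c := q1) (d := p2)); edge_fact.
- by apply: (C4_cone_triangle (c := p1) (d := q2)); edge_fact.
- by apply: (C4_cone_triangle (c := p1) (d := q2)); edge_fact.
- by apply: (C4_cone_triangle (c := p1) (d := p2)); edge_fact.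
- by apply: (C4_cone_triangle (c := p1) (d := p2)); edge_fact.
Qed.

End Configurations.

Theorem lemma5p3 (V : finType) (C : {set {set V}}) :
  is_complex C -> beta_avoiding C ->
  let N := nonghost C in
  (* (a) complete graph *)
  (forall u v, u \in N -> v \in N -> u != v -> edge C u v)
  \/
  (* (b) two complete graphs on A and B glued along the clique A :&: B *)
  (exists A B : {set V}, A :|: B = N /\
     forall u v, u \in N -> v \in N -> u != v ->
       (edge C u v <-> (u \in A /\ v \in A) \/ (u \in B /\ v \in B)))
  \/
  (* (c) join of the 4-cycle a-b-c-d-a with the complete graph on N \ {a,b,c,d} *)
  (exists a b c d : V, [/\ a \in N, b \in N, c \in N & d \in N] /\
     uniq [:: a; b; c; d] /\
     forall u v, u \in N -> v \in N -> u != v ->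
       (edge C u v <-> ~ ([set u; v] = [set a; c] \/ [set u; v] = [set b; d]))).
Proof.
move=> hC /beta_avoiding_minor_free[free_P4 free_O6 free_J1 free_J2 free_bdry] N.
apply: graph_trichotomy.
- exact: edge_sym.
- exact: edge_irr.
- exact: edge_nonghost.
- exact: skeleton_no_indep3.
- exact: skeleton_no_P4.
- exact: skeleton_no_co_P3_K2.
- exact: skeleton_no_K222.
Qed.
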